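(* Let $r\ge 2$, $t$ and $s$ be positive integers with $\binom{8r^2}{r} \le s \le \beta_r \binom{t}{r}$, where $\beta_r := (12r)^{-r/(r-1)}$. Then \[ P_2(\mathcal{C}(s,r)) \le \tfrac{1}{2}\, P_2(\mathcal{L}(s,r,t)). \]
   Context: For a hypergraph $H$, $P_2(H)=\sum_x d(x)^2$ with $d(x)$ the number of edges containing $x$. The colex order on $r$-subsets of $\mathbb{N}$ is $A<B$ iff $\sum_{i\in A}2^i<\sum_{i\in B}2^i$, and $\mathcal{C}(s,r)$ is the family of the first $s$ $r$-subsets of $\mathbb{N}$ in colex order. The lex order on $[t]^{(r)}$ (the $r$-subsets of $\{1,\dots,t\}$) is $A<B$ iff $\min(A\triangle B)\in A$, and $\mathcal{L}(s,r,t)$ is the $r$-graph on $[t]$ consisting of the first $s$ sets of $[t]^{(r)}$ in lex order. *)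

From Stdlib Require Import Reals.
From mathcomp Require Import all_boot.
Set Implicit Arguments. Unset Strict Implicit. Unset Printing Implicit Defensive.

Definition deg n (H : {set {set 'I_n}}) (x : 'I_n) : nat :=
  #|[set e in H | x \in e]|.
Definition P2 n (H : {set {set 'I_n}}) : nat := \sum_(x : 'I_n) deg H x ^ 2.

Definition colex_code n (A : {set 'I_n}) : nat := \sum_(i in A) 2 ^ i.
Definition colex_lt n (A B : {set 'I_n}) : bool := colex_code A < colex_code B.

Definition colex_init (n s r : nat) : {set {set 'I_n}} :=
  [set A : {set 'I_n} | (#|A| == r) &&
     (#|[set B : {set 'I_n} | (#|B| == r) && colex_lt B A]| < s)].

(* C(s,r): the first s r-subsets of N in colex order.  All of them lie in
   {0,...,s+r-1} (since binomial (s+r) r > s), and for subsets of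
   {0,..,N-1} the colex rank among r-subsets of N equals the colex rank among
   r-subsets of {0,..,N-1}; so C(s,r) is represented on the vertex set 'I_(s+r)
   (vertices outside have degree 0 and do not contribute to P_2). *)
Definition colexC (s r : nat) : {set {set 'I_(s + r)}} := colex_init (s + r) s r.

Definition lex_lt t (A B : {set 'I_t}) : bool :=
  [exists x : 'I_t, [&& x \in A, x \notin B &
     [forall y : 'I_t, (y < x) ==> ((y \in A) == (y \in B))]]].

Definition lexL (s r t : nat) : {set {set 'I_t}} :=
  [set A : {set 'I_t} | (#|A| == r) &&
     (#|[set B : {set 'I_t} | (#|B| == r) && lex_lt B A]| < s)].

Definition beta (r : nat) : R :=
  Rpower (Rmult 12 (INR r)) (Ropp (Rdiv (INR r) (Rminus (INR r) 1))).

From Stdlib Require Import Reals Lra.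
From mathcomp Require Import all_boot zify ring.
Set Implicit Arguments. Unset Strict Implicit. Unset Printing Implicit Defensive.

(* Both families are initial segments of a linear order on r-sets given by an
   injective code: colex directly, lex after reversing and complementing.
   Let m be least with s <= C(m, r).  The colex family lives on the first m
   vertices, so its degrees are at most C(m-1, r-1) and (m - r) P_2(C) <= (rs)^2.
   With D = C(t-1, r-1), the lex family contains every r-set meeting the first
   floor(s/D) vertices (or, if s <= D, its first s sets all contain vertex 0),
   so 2 P_2(L) >= s min(s, D).  Raising s <= beta_r C(t, r) to the power r - 1
   gives (12r)^r C(m-1, r)^(r-1) <= C(t, r)^(r-1), and comparing falling
   factorials turns this into 12 r C(m-2, r-1) <= D, i.e. 4 r^2 s <= (m - r) D;
   together with m >= 8 r^2 this yields the factor 1/2. *)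

Lemma sum_pow2_lt n x (P : pred 'I_n) :
  \sum_(i < n | P i && (i < x)) 2 ^ i < 2 ^ x.
Proof.
have sum_lt k : \sum_(i < k) 2 ^ i < 2 ^ k.
  by have := predn_exp 2 k; rewrite mul1n => <-; rewrite ltn_predL expn_gt0.
case: (leqP x n) => [le_xn | lt_nx].
  apply: leq_ltn_trans (sum_lt x); rewrite (big_ord_widen _ (fun i => 2 ^ i) le_xn).
  rewrite [X in _ <= X](bigID P) /= (eq_bigl (fun i : 'I_n => (i < x) && P i)) ?leq_addr //.
  by move=> i; rewrite andbC.
apply: (@leq_ltn_trans (\sum_(i < n) 2 ^ i)).
  by rewrite [X in _ <= X](bigID (fun i : 'I_n => P i && (i < x))) leq_addr.
by apply: leq_trans (sum_lt n) _; rewrite leq_exp2l // ltnW.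
Qed.

Lemma colex_code_lt n (A B : {set 'I_n}) (x : 'I_n) :
  x \in B -> x \notin A -> (forall y : 'I_n, x < y -> (y \in A) = (y \in B)) ->
  colex_code A < colex_code B.
Proof.
move=> xB xA agree; rewrite /colex_code (bigID (fun i : 'I_n => i < x)) /=.
rewrite [X in _ < X](bigID (fun i : 'I_n => i <= x)) /=.
have -> : \sum_(i in A | ~~ (i < x)) 2 ^ i = \sum_(i in B | ~~ (i <= x)) 2 ^ i.
  apply: eq_bigl => i; rewrite -leqNgt -ltnNge.
  case: (ltngtP x i) => [lt_xi | _ | /val_inj <-]; rewrite ?andbT ?andbF //.
    by rewrite agree.
  exact: negbTE.
rewrite ltn_add2r; apply: leq_trans (sum_pow2_lt x (mem A)) _.
by rewrite (bigD1 x) ?leq_addr //= xB leqnn.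
Qed.

Lemma exists_max_diff n (A B : {set 'I_n}) : A != B ->
  exists x : 'I_n, (x \in A) != (x \in B) /\
    forall y : 'I_n, x < y -> (y \in A) = (y \in B).
Proof.
move=> neqAB; have [x0 diff_x0] : exists x, (x \in A) != (x \in B).
  apply/existsP; apply: contraNT neqAB => /existsPn same.
  by apply/eqP/setP => x; apply/eqP; move: (same x); rewrite negbK.
case: (@arg_maxnP _ x0 (fun x => (x \in A) != (x \in B)) val diff_x0) => x diff_x xmax.
exists x; split=> // y lt_xy; apply/eqP; apply: contraTT lt_xy => diff_y.
by rewrite -leqNgt; apply: xmax.
Qed.

Lemma colex_code_ltP n (A B : {set 'I_n}) :
  reflect (exists x : 'I_n, [/\ x \in B, x \notin A &
             forall y : 'I_n, x < y -> (y \in A) = (y \in B)])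
          (colex_code A < colex_code B).
Proof.
apply: (iffP idP) => [lt_AB | [x [xB xA agree]]]; last exact: colex_code_lt xB xA agree.
have neqAB : A != B by apply: contraTneq lt_AB => ->; rewrite ltnn.
have [x [diff agree]] := exists_max_diff neqAB.
case: (boolP (x \in A)) diff => [xA | xA] /=; last by rewrite negbK => xB; exists x.
move=> xB; suff: colex_code B < colex_code A by rewrite ltnNge ltnW.
by apply: colex_code_lt xA xB _ => y /agree.
Qed.

Lemma colex_code_inj n : injective (@colex_code n).
Proof.
move=> A B eq_code; apply/eqP; apply: contraT => neqAB.
have [x [diff agree]] := exists_max_diff neqAB.
case: (boolP (x \in A)) diff => [xA | xA] /= => [xB | ].
  by have := colex_code_lt xA xB (fun y h => esym (agree y h)); rewrite eq_code ltnn.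
by rewrite negbK => xB; have := colex_code_lt xB xA agree; rewrite eq_code ltnn.
Qed.

(* Reversing and complementing turns the lex order into the colex order. *)
Definition lex_code t (A : {set 'I_t}) : nat :=
  colex_code [set i : 'I_t | rev_ord i \notin A].

Lemma lex_ltE t (A B : {set 'I_t}) : lex_lt A B = (lex_code A < lex_code B).
Proof.
have rev_lt (x y : 'I_t) : (rev_ord x < rev_ord y) = (y < x).
  by rewrite /= ltn_sub2lE // ltn_ord.
apply/existsP/colex_code_ltP => [[x /and3P [xA xB /forallP agree]] |
                                  [x [xB xA agree]]].
  exists (rev_ord x); rewrite !inE rev_ordK xA xB; split=> // y lt_xy.
  rewrite !inE; congr negb; apply/eqP/(implyP (agree (rev_ord y))).
  by rewrite -rev_lt rev_ordK.
move: xA xB; rewrite !inE negbK => xA xB.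
exists (rev_ord x); rewrite xA xB; apply/forallP => y; apply/implyP => lt_yx.
have := agree (rev_ord y); rewrite !inE rev_ordK -{1}[x]rev_ordK rev_lt.
by move=> /(_ lt_yx) /negb_inj ->.
Qed.

Section InitialSegment.
Variables (T : finType) (f : T -> nat).

Definition initial_seg (X : {set T}) (s : nat) : {set T} :=
  [set a in X | #|[set b in X | f b < f a]| < s].

Definition down_closed (X U : {set T}) : Prop :=
  forall a b, a \in U -> b \in X -> f b < f a -> b \in U.

Lemma card_initial_seg_le (X : {set T}) s :
  {in X &, injective f} -> #|initial_seg X s| <= s.
Proof.
move=> f_inj; set I := initial_seg X s.
have [-> | [a0 Ia0]] := set_0Vmem I; first by rewrite cards0.
have [a Ia amax] := @arg_maxnP _ a0 [in I] f Ia0.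
have subI : I :\ a \subset [set b in X | f b < f a].
  apply/subsetP => b /setD1P [neq_ba Ib]; have le_ba : f b <= f a := amax b Ib.
  move: (Ib) (Ia); rewrite !inE => /andP [Xb _] /andP [Xa _].
  rewrite Xb ltn_neqAle le_ba andbT; apply: contra neq_ba => /eqP eq_f.
  by rewrite (f_inj b a Xb Xa eq_f).
move: (Ia); rewrite inE => /andP [_ lt_s].
by rewrite (cardsD1 a I) Ia add1n; apply: leq_ltn_trans (subset_leq_card subI) lt_s.
Qed.

Lemma leq_card_initial_seg (X : {set T}) s : s <= #|X| -> s <= #|initial_seg X s|.
Proof.
move=> le_sX; set I := initial_seg X s; rewrite leqNgt; apply/negP => lt_Is.
have [a0 Da0] : exists a, a \in X :\: I.
  apply/set0Pn; rewrite -card_gt0 cardsD; have := subset_leq_card (subsetIr X I).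
  by rewrite setIC; lia.
have [a /setDP [Xa Ia] amin] := @arg_minnP _ a0 [in X :\: I] f Da0.
apply: (negP Ia); rewrite inE Xa; apply: leq_ltn_trans lt_Is; apply: subset_leq_card.
apply/subsetP => b; rewrite inE => /andP [Xb lt_ba]; apply: contraTT lt_ba => Ib.
by rewrite -leqNgt amin // inE Ib.
Qed.

Lemma initial_seg_down_closed (X U : {set T}) s :
  U \subset X -> down_closed X U -> initial_seg U s = U :&: initial_seg X s.
Proof.
move=> sub_UX closed; apply/setP => a; rewrite !inE.
case Ua: (a \in U); rewrite //= (subsetP sub_UX a Ua) /=.
congr (_ < s); apply: eq_card => b; rewrite !inE.
case lt_ba: (f b < f a); rewrite ?andbF ?andbT //.
by apply/idP/idP => [/(subsetP sub_UX) | Xb]; last exact: closed Ua Xb lt_ba.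
Qed.

Lemma initial_seg_small (U : {set T}) s : #|U| <= s -> initial_seg U s = U.
Proof.
move=> le_Us; apply/setP => a; rewrite inE; case Ua: (a \in U) => //=.
apply: leq_trans le_Us; rewrite (cardsD1 a U) Ua ltnS; apply: subset_leq_card.
apply/subsetP => b; rewrite !inE => /andP [-> lt_ba]; rewrite andbT.
by apply: contraTneq lt_ba => ->; rewrite ltnn.
Qed.

Lemma sub_initial_seg (X U : {set T}) s :
  U \subset X -> down_closed X U -> #|U| <= s -> U \subset initial_seg X s.
Proof.
move=> sub_UX closed le_Us; apply/setIidPl.
by rewrite -initial_seg_down_closed // initial_seg_small.
Qed.

Lemma card_initial_seg_down_closed (X U : {set T}) s :
  U \subset X -> down_closed X U -> minn s #|U| <= #|U :&: initial_seg X s|.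
Proof.
move=> sub_UX closed; rewrite -initial_seg_down_closed //.
apply: leq_trans (leq_card_initial_seg (geq_minr s #|U|)) _.
apply: subset_leq_card; apply/subsetP => a; rewrite !inE => /andP [-> lt_a].
exact: leq_trans lt_a (geq_minl _ _).
Qed.

End InitialSegment.

Lemma sum_deg_uniform n (H : {set {set 'I_n}}) r :
  {in H, forall e : {set 'I_n}, #|e| = r} -> \sum_x deg H x = r * #|H|.
Proof.
move=> uniform; rewrite /deg.
under eq_bigr => x _ do rewrite -sum1dep_card big_mkcondr.
rewrite exchange_big /=.
under eq_bigr => e He do rewrite -big_mkcond sum1_card uniform //.
by rewrite sum_nat_const mulnC.
Qed.

Lemma P2_le_max_deg n (H : {set {set 'I_n}}) r M :
  {in H, forall e : {set 'I_n}, #|e| = r} -> (forall x, deg H x <= M) ->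
  P2 H <= M * (r * #|H|).
Proof.
move=> uniform le_M; rewrite -(sum_deg_uniform uniform) /P2 big_distrr.
by apply: leq_sum => x _; rewrite leq_mul2r le_M orbT.
Qed.

Lemma card_star (T : finType) (S : {set T}) (x : T) k : x \in S ->
  #|[set B : {set T} | (B \subset S) && (#|B| == k.+1) && (x \in B)]| = 'C(#|S|.-1, k).
Proof.
move=> Sx; rewrite (cardsD1 x S) Sx add1n /= -cards_draws.
have inj : {in [set B : {set T} | (B \subset S :\ x) && (#|B| == k)] &,
             injective (fun B => x |: B)}.
  move=> B C; rewrite !inE => /andP [sub_B _] /andP [sub_C _] eq_xBC.
  have notin (D : {set T}) : D \subset S :\ x -> x \notin D.
    by move=> sub_D; apply/negP => /(subsetP sub_D); rewrite !inE eqxx.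
  by rewrite -(setU1K (notin B sub_B)) -(setU1K (notin C sub_C)) eq_xBC.
rewrite -(card_in_imset inj); apply: eq_card => B; rewrite !inE; apply/idP/imsetP.
  case/andP=> /andP [sub_B /eqP card_B] xB; exists (B :\ x); last by rewrite setD1K.
  by rewrite inE setSD //=; move: (cardsD1 x B); rewrite xB card_B add1n => -[<-].
case=> C; rewrite inE => /andP [sub_C /eqP card_C] ->.
have xC : x \notin C by apply/negP => /(subsetP sub_C); rewrite !inE eqxx.
rewrite cardsU1 xC card_C setU11 eqxx andbT subUset sub1set Sx.
by rewrite andbT; apply: subset_trans sub_C (subsetDl S [set x]).
Qed.

Lemma card_lt_ord n m : m <= n -> #|[set i : 'I_n | i < m]| = m.
Proof.
move=> le_mn; rewrite -sum1dep_card -(big_ord_widen _ (fun _ => 1) le_mn).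
by rewrite sum1_card card_ord.
Qed.

Lemma colex_initE n s r :
  colex_init n s r = initial_seg (@colex_code n) [set A : {set 'I_n} | #|A| == r] s.
Proof.
apply/setP => A; rewrite !inE; congr (_ && (_ < s)); apply: eq_card => B.
by rewrite !inE.
Qed.

Lemma card_colex_init n s r : #|colex_init n s r| <= s.
Proof. by rewrite colex_initE card_initial_seg_le // => A B _ _ /colex_code_inj. Qed.

Lemma colex_init_sub n s r m (A : {set 'I_n}) : m <= n -> s <= 'C(m, r) ->
  A \in colex_init n s r -> A \subset [set i : 'I_n | i < m].
Proof.
move=> le_mn le_s; rewrite inE => /andP [_ lt_s]; apply/subsetP => i Ai.
rewrite inE ltnNge; apply: contraTN lt_s => le_mi; rewrite -leqNgt.
apply: leq_trans le_s _; rewrite -{1}(card_lt_ord le_mn) -cards_draws.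
apply: subset_leq_card; apply/subsetP => B; rewrite !inE => /andP [sub_B /eqP ->].
rewrite eqxx /colex_lt; apply: leq_trans (_ : 2 ^ i <= _).
  have -> : colex_code B = \sum_(j < n | (j \in B) && (j < m)) 2 ^ j.
    apply: eq_bigl => j; case Bj: (j \in B) => //=.
    by have := subsetP sub_B j Bj; rewrite inE => ->.
  by apply: leq_trans (sum_pow2_lt m [in B]) _; rewrite leq_exp2l.
by rewrite /colex_code (bigD1 i) //= leq_addr.
Qed.

Lemma colex_deg n s r m (x : 'I_n) : 0 < r -> m <= n -> s <= 'C(m, r) ->
  deg (colex_init n s r) x <= 'C(m.-1, r.-1).
Proof.
move=> r_gt0 le_mn le_s; set S := [set i : 'I_n | i < m].
have star_sub : [set e in colex_init n s r | x \in e] \subset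
    [set B : {set 'I_n} | (B \subset S) && (#|B| == r.-1.+1) && (x \in B)].
  apply/subsetP => e /setIdP [Ce xe]; rewrite !inE xe prednK // andbT.
  by rewrite (colex_init_sub le_mn le_s Ce); move: Ce; rewrite inE => /andP [].
apply: leq_trans (subset_leq_card star_sub) _.
case Sx: (x \in S); first by rewrite (card_star _ Sx) card_lt_ord.
rewrite (_ : [set B : {set 'I_n} | _] = set0) ?cards0 //; apply/setP => B.
rewrite !inE; apply/negP => /andP [/andP [sub_B _] xB].
by move: (subsetP sub_B x xB); rewrite Sx.
Qed.

Lemma colex_P2 n s r m : 0 < r -> m <= n -> 'C(m.-1, r) < s <= 'C(m, r) ->
  (m - r) * P2 (colex_init n s r) <= (r * s) ^ 2.
Proof.
move=> r_gt0 le_mn /andP [lt_s le_s].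
have uniform : {in colex_init n s r, forall e : {set 'I_n}, #|e| = r}.
  by move=> e; rewrite inE => /andP [/eqP].
have le_P2 := P2_le_max_deg uniform (fun x => colex_deg x r_gt0 le_mn le_s).
apply: leq_trans (leq_mul (leqnn _) le_P2) _.
have E : (m - r) * 'C(m.-1, r.-1) = r * 'C(m.-1, r).
  by rewrite -[in RHS](prednK r_gt0) mul_bin_left; congr (_ * _); lia.
rewrite mulnA E expnS expn1; apply: leq_mul; rewrite leq_mul2l.
  by rewrite (ltnW lt_s) orbT.
by rewrite card_colex_init orbT.
Qed.

Lemma lexLE s r t :
  lexL s r t = initial_seg (@lex_code t) [set A : {set 'I_t} | #|A| == r] s.
Proof.
apply/setP => A; rewrite !inE; congr (_ && (_ < s)); apply: eq_card => B.
by rewrite !inE lex_ltE.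
Qed.

Definition hitting_prefix r t k : {set {set 'I_t}} :=
  [set B : {set 'I_t} | (#|B| == r) && [exists y : 'I_t, (y < k) && (y \in B)]].

Lemma hitting_prefix_sub r t k :
  hitting_prefix r t k \subset [set A : {set 'I_t} | #|A| == r].
Proof. by apply/subsetP => B; rewrite !inE => /andP []. Qed.

Lemma hitting_prefix_down_closed r t k :
  down_closed (@lex_code t) [set A : {set 'I_t} | #|A| == r] (hitting_prefix r t k).
Proof.
move=> A B; rewrite !inE => /andP [_ /existsP [z /andP [lt_zk Az]]] -> /=.
rewrite -lex_ltE => /existsP [y /and3P [By Ay /forallP agree]].
apply/existsP; case: (ltnP z y) => [lt_zy | le_yz].
  by exists z; move/implyP: (agree z) => /(_ lt_zy) /eqP ->; rewrite lt_zk Az.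
by exists y; rewrite By andbT; apply: leq_ltn_trans le_yz lt_zk.
Qed.

Lemma card_star_ord t r (x : 'I_t) : 0 < r ->
  #|[set B : {set 'I_t} | (#|B| == r) && (x \in B)]| = 'C(t.-1, r.-1).
Proof.
move=> r_gt0; rewrite -[t in RHS]card_ord -cardsT -(card_star _ (in_setT x)) prednK //.
by apply: eq_card => B; rewrite !inE subsetT.
Qed.

Lemma card_hitting_prefix r t k : 0 < r ->
  #|hitting_prefix r t k| <= k * 'C(t.-1, r.-1).
Proof.
move=> r_gt0; elim: k => [|k IH].
  rewrite leqn0 cards_eq0; apply/eqP/setP => B; rewrite !inE.
  by apply/negP => /andP [_ /existsP [y]].
set V := [set B : {set 'I_t} |
           (#|B| == r) && [exists y : 'I_t, (y == k :> nat) && (y \in B)]].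
have card_V : #|V| <= 'C(t.-1, r.-1).
  case: (ltnP k t) => [lt_kt | le_tk].
    rewrite -(card_star_ord (Ordinal lt_kt) r_gt0); apply: subset_leq_card.
    apply/subsetP => B; rewrite !inE => /andP [-> /existsP [y /andP [/eqP yk By]]].
    by rewrite (_ : Ordinal lt_kt = y) //; apply: val_inj.
  rewrite (_ : V = set0) ?cards0 //; apply/setP => B; rewrite !inE.
  apply/negP => /andP [_ /existsP [y /andP [/eqP yk _]]].
  by have := ltn_ord y; rewrite yk ltnNge le_tk.
rewrite mulSn addnC; apply: leq_trans (leq_add IH card_V).
apply: leq_trans (leq_card_setU _ _); apply: subset_leq_card; apply/subsetP => B.
rewrite !inE => /andP [-> /existsP [y /andP [lt_yk By]]] /=.
rewrite ltnS leq_eqVlt in lt_yk; case/orP: lt_yk => [yk | lt_yk].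
  by apply/orP; right; apply/existsP; exists y; rewrite yk.
by apply/orP; left; apply/existsP; exists y; rewrite lt_yk.
Qed.

Lemma lexL_deg_first s r t (x0 : 'I_t) : val x0 = 0 -> 0 < r ->
  minn s 'C(t.-1, r.-1) <= deg (lexL s r t) x0.
Proof.
move=> x0_0 r_gt0; set U := hitting_prefix r t 1.
have := @card_initial_seg_down_closed _ (@lex_code t) _ _ s (@hitting_prefix_sub r t 1)
                                            (@hitting_prefix_down_closed r t 1).
rewrite -lexLE -/U => le_UL; apply: leq_trans (leq_trans _ le_UL) _.
  rewrite leq_min geq_minl /= (leq_trans (geq_minr _ _)) //.
  rewrite -(card_star_ord x0 r_gt0); apply: subset_leq_card; apply/subsetP => B.
  by rewrite !inE => /andP [-> x0B]; apply/existsP; exists x0; rewrite x0_0 x0B.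
apply: subset_leq_card; apply/subsetP => B; rewrite !inE => /andP [].
move=> /andP [_ /existsP [y /andP [y_0 By]]] -> /=.
by rewrite (_ : x0 = y) //; apply: val_inj; move: y_0; rewrite /= x0_0; lia.
Qed.

Lemma lexL_deg_prefix s r t k (x : 'I_t) : 0 < r -> k * 'C(t.-1, r.-1) <= s ->
  x < k -> 'C(t.-1, r.-1) <= deg (lexL s r t) x.
Proof.
move=> r_gt0 le_s lt_xk.
have := sub_initial_seg (@hitting_prefix_sub r t k) (@hitting_prefix_down_closed r t k)
                        (leq_trans (card_hitting_prefix t k r_gt0) le_s).
rewrite -lexLE => /subsetP sub_L; rewrite -(card_star_ord x r_gt0).
apply: subset_leq_card; apply/subsetP => B; rewrite inE => /andP [card_B xB].
apply/setIdP; split=> //; apply: sub_L; rewrite inE card_B.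
by apply/existsP; exists x; rewrite lt_xk.
Qed.

Lemma lexL_P2 s r t : 0 < r -> 0 < t -> s <= 'C(t, r) ->
  s * minn s 'C(t.-1, r.-1) <= 2 * P2 (lexL s r t).
Proof.
move=> r_gt0 t_gt0 le_s; set D := 'C(t.-1, r.-1).
case: (leqP s D) => [le_sD | lt_Ds].
  have := @lexL_deg_first s r t (Ordinal t_gt0) erefl r_gt0; rewrite (minn_idPl le_sD).
  move=> le_deg; apply: (@leq_trans (P2 (lexL s r t))); last exact: leq_pmull.
  rewrite /P2 (bigD1 (Ordinal t_gt0)) //=; apply: leq_trans (leq_addr _ _).
  by rewrite expnS expn1 leq_mul.
have D_gt0 : 0 < D by rewrite bin_gt0 -!subn1 leq_sub2r // -bin_gt0; lia.
set k := s %/ D; have le_kD : k * D <= s := leq_divM s D.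
have lt_s : s < k.+1 * D := ltn_ceil s D_gt0.
have k_gt0 : 0 < k by rewrite divn_gt0 // ltnW.
have le_kt : k <= t.
  rewrite -(leq_pmul2r D_gt0) /D mul_bin_diag prednK //; apply: leq_trans le_kD _.
  by apply: leq_trans le_s _; rewrite leq_pmull.
have sum_prefix : k * D ^ 2 <= \sum_(x : 'I_t | x < k) deg (lexL s r t) x ^ 2.
  apply: leq_trans (_ : \sum_(x : 'I_t | x < k) D ^ 2 <= _); last first.
    by apply: leq_sum => x lt_xk; rewrite leq_exp2r // (lexL_deg_prefix r_gt0 le_kD).
  by rewrite sum_nat_const -cardsE card_lt_ord.
apply: (@leq_trans (2 * (k * D ^ 2))); first by nia.
rewrite leq_mul2l /P2 (bigID (fun x : 'I_t => x < k)) /=.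
exact: leq_trans sum_prefix (leq_addr _ _).
Qed.

Lemma bin_pred_exp_cmp a t j : a <= t -> t ^ j * 'C(a.-1, j) <= a ^ j * 'C(t.-1, j).
Proof.
move=> le_at; rewrite -(leq_pmul2r (fact_gt0 j)) -!mulnA !bin_ffact.
elim: j => [|j IH]; first by rewrite !expn0 !ffactn0.
rewrite !ffactnSr !expnS; have step : t * (a.-1 - j) <= a * (t.-1 - j) by nia.
by have := leq_mul IH step; nia.
Qed.

Lemma bin_pred_gap_of_pow c r a t : 0 < r -> 0 < a -> a <= t ->
  c ^ r * 'C(a, r) ^ r.-1 <= 'C(t, r) ^ r.-1 -> c * 'C(a.-1, r.-1) <= 'C(t.-1, r.-1).
Proof.
case: r => // j _ a_gt0 le_at /=; set P := 'C(a.-1, j); set D := 'C(t.-1, j).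
have diag n : n * 'C(n.-1, j) = j.+1 * 'C(n, j.+1) by rewrite mul_bin_diag.
move=> hyp; have {hyp} : c ^ j.+1 * (a * P) ^ j <= (t * D) ^ j.
  by rewrite /P /D !diag !expnMn mulnCA leq_mul2l hyp orbT.
have := @bin_pred_exp_cmp a t j le_at; rewrite -/P -/D => cmp le_pow.
rewrite -(leq_exp2r _ _ (ltn0Sn j)) -(@leq_pmul2l (a ^ j)) ?expn_gt0 ?a_gt0 //.
(* a^j (cP)^(j+1) = c^(j+1) (aP)^j P <= (tD)^j P = (t^j P) D^j <= a^j D^(j+1) *)
have -> : a ^ j * (c * P) ^ j.+1 = c ^ j.+1 * (a * P) ^ j * P.
  by rewrite !expnMn !expnS; ring.
apply: leq_trans (leq_mul le_pow (leqnn P)) _.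
have -> : (t * D) ^ j * P = t ^ j * P * D ^ j by rewrite expnMn; ring.
by rewrite expnS mulnA leq_mul2r cmp orbT.
Qed.

Lemma threshold_gap r m s D : 0 < r -> 16 * r <= m -> s <= 'C(m, r) ->
  12 * r * 'C(m.-2, r.-1) <= D -> 4 * r ^ 2 * s <= (m - r) * D.
Proof.
move=> r_gt0 le_m le_s key; set Q := 'C(m.-1, r.-1); set R := 'C(m.-2, r.-1).
have diag : r * 'C(m, r) = m * Q by rewrite mul_bin_diag prednK.
have down : (m - r) * Q = m.-1 * R.
  by rewrite mul_bin_down; congr (_ * _); lia.
have mr_gt0 : 0 < 3 * (m - r) by lia.
rewrite -(leq_pmul2l mr_gt0).
have -> : 3 * (m - r) * (4 * r ^ 2 * s) = 12 * r * (m - r) * (r * s) by ring.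
apply: leq_trans (_ : 12 * r * (m - r) * (r * 'C(m, r)) <= _).
  by rewrite leq_mul2l leq_mul2l le_s !orbT.
have -> : 12 * r * (m - r) * (r * 'C(m, r)) = m * m.-1 * (12 * r * R).
  by rewrite diag mulnCA -mulnA down; ring.
apply: leq_trans (leq_mul (leqnn _) key) _.
have : m * m.-1 <= 3 * (m - r) * (m - r) by nia.
by move=> /leq_mul /(_ (leqnn D)); rewrite -!mulnA.
Qed.

Lemma ltn_bin_add n k : 0 < k -> n < 'C(n + k, k).
Proof.
case: k => // k _; elim: k => [|k IH]; first by rewrite addn1 bin1.
by rewrite addnS binS; apply: leq_trans IH (leq_addl _ _).
Qed.

Lemma ltn_bin2l n1 n2 r : 0 < r -> r <= n2 -> n1 < n2 -> 'C(n1, r) < 'C(n2, r).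
Proof.
case: r => // k _; case: n2 => // n2 le_kn; rewrite ltnS => le_n12.
rewrite binS; apply: leq_ltn_trans (leq_bin2l _ le_n12) _.
by rewrite -[X in X < _]addn0 ltn_add2l bin_gt0.
Qed.

Lemma bin_leq_inv n1 n2 r : 0 < r -> r <= n1 -> 'C(n1, r) <= 'C(n2, r) -> n1 <= n2.
Proof.
move=> r_gt0 le_rn le_C; rewrite leqNgt; apply: contraTN le_C => lt_n21.
by rewrite -ltnNge ltn_bin2l.
Qed.

Lemma bin_ltn_inv n1 n2 r : 'C(n1, r) < 'C(n2, r) -> n1 < n2.
Proof.
move=> lt_C; rewrite ltnNge; apply: contraTN lt_C => le_n21.
by rewrite -leqNgt leq_bin2l.
Qed.

Lemma bin_threshold r s : 0 < r -> 0 < s -> exists m, 'C(m.-1, r) < s <= 'C(m, r).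
Proof.
move=> r_gt0 s_gt0.
have ex_m : exists m, s <= 'C(m, r) by exists (s + r); exact/ltnW/ltn_bin_add.
have [m le_s min_m] := ex_minnP ex_m.
exists m; rewrite le_s andbT ltnNge; apply/negP => /min_m.
case: m le_s {min_m} => [|m] /=; last by rewrite ltnn.
by rewrite bin0n (gtn_eqF r_gt0) /= leqn0 (gtn_eqF s_gt0).
Qed.

Lemma ltn_of_scaled_pow c e x y : 1 < c -> 0 < e -> 0 < x ->
  c * x ^ e <= y ^ e -> x < y.
Proof.
move=> lt1c e_gt0 x_gt0 le_pow; rewrite -(ltn_exp2r _ _ e_gt0).
by apply: leq_trans le_pow; apply: ltn_Pmull; rewrite ?expn_gt0 ?x_gt0.
Qed.

Lemma leq_double_of_bounds r s d u c l : 0 < u -> 4 * r ^ 2 <= u ->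
  4 * r ^ 2 * s <= u * d -> u * c <= (r * s) ^ 2 -> s * minn s d <= 2 * l -> 2 * c <= l.
Proof.
move=> u_gt0 le_u le_ud le_uc le_l.
have le_min : 4 * r ^ 2 * s <= u * minn s d.
  by case: (leqP s d) => _ //; rewrite leq_mul2r le_u orbT.
have le_mul_s := leq_mul le_min (leqnn s); have le_mul_u := leq_mul (leqnn u) le_l.
have : u * (4 * c) <= u * (2 * l) by nia.
by rewrite leq_pmul2l //; lia.
Qed.

Lemma INR_expn x n : INR (x ^ n) = pow (INR x) n.
Proof. by elim: n => [|n IH]; rewrite ?expnS ?mult_INR ?IH. Qed.

Section BetaBound.
Local Open Scope R_scope.

Lemma beta_pow r : (2 <= r)%N -> pow (beta r) r.-1 * pow (12 * INR r) r = 1.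
Proof.
move=> le2r; have r_ge2 : 2 <= INR r by apply: (le_INR 2); apply/leP.
have c_gt0 : 0 < 12 * INR r by lra.
have pred_r : INR r.-1 = INR r - 1.
  by have := S_INR r.-1; rewrite prednK ?(ltnW le2r) //; lra.
rewrite -Rpower_pow /beta ?Rpower_mult; last exact: exp_pos.
rewrite pred_r (_ : - (INR r / (INR r - 1)) * (INR r - 1) = - INR r); last first.
  by rewrite Ropp_mult_distr_l Rmult_assoc Rinv_l ?Rmult_1_r //; lra.
by rewrite Rpower_Ropp Rpower_pow // Rinv_l //; apply: pow_nonzero; lra.
Qed.

Lemma le_beta_mul_pow r x y : (2 <= r)%N -> INR x <= beta r * INR y ->
  ((12 * r) ^ r * x ^ r.-1 <= y ^ r.-1)%N.
Proof.
move=> le2r le_xy; apply/leP/INR_le; rewrite mult_INR !INR_expn mult_INR.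
have -> : INR 12 = 12 by rewrite INR_IZR_INZ.
have r_ge2 : 2 <= INR r by apply: (le_INR 2); apply/leP.
have c_pos : 0 < pow (12 * INR r) r by apply: pow_lt; lra.
have le_pow : pow (INR x) r.-1 <= pow (beta r) r.-1 * pow (INR y) r.-1.
  by rewrite -Rpow_mult_distr; apply: pow_incr; split=> //; apply: pos_INR.
apply: Rle_trans (Rmult_le_compat_l _ _ _ (Rlt_le _ _ c_pos) le_pow) _.
by rewrite -Rmult_assoc (Rmult_comm (pow _ r)) beta_pow // Rmult_1_l; apply: Rle_refl.
Qed.

Lemma INR_le_half a b : (2 * a <= b)%N -> INR a <= / 2 * INR b.
Proof. by move/leP/le_INR; rewrite mult_INR /=; lra. Qed.

End BetaBound.

Theorem proposition6p3 (r t s : nat) :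
  2 <= r -> 0 < t -> 0 < s ->
  'C(8 * r ^ 2, r) <= s ->
  (Rle (INR s) (Rmult (beta r) (INR 'C(t, r)))) ->
  (Rle (INR (P2 (colexC s r))) (Rmult (Rinv 2) (INR (P2 (lexL s r t))))).
Proof.
move=> le2r t_gt0 s_gt0 le_s le_beta; have r_gt0 : 0 < r by apply: ltnW.
have pow_s := le_beta_mul_pow le2r le_beta.
have lt_sC : s < 'C(t, r).
  apply: (ltn_of_scaled_pow _ _ s_gt0 pow_s); last lia.
  by apply: (@leq_ltn_trans r); [lia | apply: ltn_expl; lia].
have [m /andP [lt_s_m le_s_m]] := bin_threshold r_gt0 s_gt0.
have le_Nm : 8 * r ^ 2 <= m.
  by apply: (bin_leq_inv r_gt0 _ (leq_trans le_s le_s_m)); nia.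
have lt_m_sr : m.-1 < s + r := bin_ltn_inv (ltn_trans lt_s_m (ltn_bin_add s r_gt0)).
have lt_m_t : m.-1 < t := bin_ltn_inv (ltn_trans lt_s_m lt_sC).
have key : 12 * r * 'C(m.-2, r.-1) <= 'C(t.-1, r.-1).
  apply: bin_pred_gap_of_pow; [done | lia | exact: ltnW | ].
  by apply: leq_trans pow_s; rewrite leq_mul2l leq_exp2r ?(ltnW lt_s_m) ?orbT //; lia.
apply/INR_le_half/(@leq_double_of_bounds r s 'C(t.-1, r.-1) (m - r)).
- by nia.
- by nia.
- by apply: threshold_gap => //; nia.
- by apply: colex_P2 => //; [lia | rewrite lt_s_m le_s_m].
- exact: lexL_P2 r_gt0 t_gt0 (ltnW lt_sC).
Qed.
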